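(* Let $G=(V,E)$ be an undirected graph, $k$ a positive integer, $S\subseteq V$, and $m_{\overline S}:V-S\to\mathbb{Z}$ an in-degree specification on $V-S$. Define $h:2^S\to\mathbb{Z}\cup\{-\infty\}$ by $h(\emptyset)=0$, $h(S)=|E|-\widetilde m_{\overline S}(V-S)$, and $h(Z)=\max\{k+i_G(Z\cup X)-\widetilde m_{\overline S}(X):X\subseteq V-S\}$ for $\emptyset\subset Z\subset S$, and let $B_S=\{x\in\mathbb{R}^S:\widetilde x(S)=h(S),\ \widetilde x(Z)\ge h(Z)\ \forall Z\subset S\}$. Then the set of in-degree vectors of those orientations $D$ of $G$ which are locally $k$-edge-connected in $S$ and satisfy $\varrho_D(v)=m_{\overline S}(v)$ for all $v\in V-S$ is an M-convex set, namely it equals $\{(m_S,m_{\overline S}): m_S\in B_S\cap\mathbb{Z}^S\}$.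
   Context: $i_G(Y)$ is the number of edges with both end-nodes in $Y$; $\widetilde x(Z)=\sum_{v\in Z}x(v)$; $\varrho_D(v)$ is the number of arcs with head $v$. A digraph $D$ on $V$ is locally $k$-edge-connected in $S$ if for any two distinct nodes $s,t\in S$ there are $k$ arc-disjoint directed paths from $s$ to $t$ (equivalently, $\varrho_D(X)\ge k$ for every $X\subset V$ with $X\cap S$ and $S-X$ non-empty). An M-convex set is the set of integral points of an integral base-polyhedron. *)

From HB Require Import structures.
From mathcomp Require Import all_boot all_order all_algebra.
Set Implicit Arguments. Unset Strict Implicit. Unset Printing Implicit Defensive.
Import Order.TTheory GRing.Theory Num.Theory.
Local Open Scope ring_scope.

(* An orientation is a boolean per edge:
   true orients e = (u,w) as u -> w, false as w -> u. *)

Section Graph.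
Variables (V E : finType) (ends : E -> V * V).

Definition head (o : {ffun E -> bool}) (e : E) : V :=
  if o e then (ends e).2 else (ends e).1.
Definition tail (o : {ffun E -> bool}) (e : E) : V :=
  if o e then (ends e).1 else (ends e).2.

Definition indeg (o : {ffun E -> bool}) (v : V) : nat :=
  #|[set e | head o e == v]|.

Definition rho (o : {ffun E -> bool}) (X : {set V}) : nat :=
  #|[set e | (head o e \in X) && (tail o e \notin X)]|.

Definition loc_kec (o : {ffun E -> bool}) (S : {set V}) (k : nat) : Prop :=
  forall X : {set V}, X :&: S != set0 -> S :\: X != set0 -> (k <= rho o X)%N.

Definition iG (Y : {set V}) : nat :=
  #|[set e | ((ends e).1 \in Y) && ((ends e).2 \in Y)]|.

(* the function h : 2^S -> Z (the max is over a nonempty family, X = set0) *)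
Definition hS (k : nat) (S : {set V}) (msb : V -> int) (Z : {set V}) : int :=
  if Z == set0 then 0
  else if Z == S then (#|E|%:Z - \sum_(v in ~: S) msb v)
  else \big[Num.max/(k%:Z + (iG Z)%:Z)]_(X : {set V} | X \subset ~: S)
          (k%:Z + (iG (Z :|: X))%:Z - \sum_(v in X) msb v).

(* integral points of B_S (only the coordinates in S matter) *)
Definition in_BS_int (k : nat) (S : {set V}) (msb : V -> int) (x : V -> int) : Prop :=
  \sum_(v in S) x v = hS k S msb S /\
  forall Z : {set V}, Z \proper S -> hS k S msb Z <= \sum_(v in Z) x v.

Definition indeg_vectors (k : nat) (S : {set V}) (msb : V -> int) (m : V -> int) : Prop :=
  exists o : {ffun E -> bool},
    [/\ loc_kec o S k,
        (forall v, v \notin S -> (indeg o v)%:Z = msb v) &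
        (forall v, m v = (indeg o v)%:Z)].
End Graph.

(* M-convex sets: integral points of an integral base-polyhedron
   B'(p) = {x : x(Z) >= p(Z) for all Z, x(T) = p(T)} with
   p : 2^T -> Z u {-oo} fully supermodular (None encodes -oo). *)
Section MConvex.
Variable T : finType.

Definition fully_supermodular (p : {set T} -> option int) : Prop :=
  [/\ p set0 = Some 0,
      p setT <> None &
      forall (X Y : {set T}) (a b : int), p X = Some a -> p Y = Some b ->
        exists c d : int, [/\ p (X :&: Y) = Some c, p (X :|: Y) = Some d &
                              a + b <= c + d]].

Definition base_int_points (p : {set T} -> option int) (x : T -> int) : Prop :=
  p setT = Some (\sum_(t in T) x t) /\
  forall (Z : {set T}) (a : int), p Z = Some a -> a <= \sum_(t in Z) x t.

Definition Mconvex (M : (T -> int) -> Prop) : Prop :=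
  exists p, fully_supermodular p /\ forall x, M x <-> base_int_points p x.
End MConvex.

(* By Hakimi's theorem, m is the in-degree vector of an orientation iff
   m(V) = |E| and m(Y) >= i_G(Y) for every Y.  Since rho(Y) = m(Y) - i_G(Y),
   local k-edge-connectivity in S asks m(Y) >= k + i_G(Y) for every Y
   separating S; splitting Y into Z = Y /\ S and X = Y - S, where m = m_{S-bar},
   and maximising over X turns these conditions into m_S in B_S.
   As h is crossing supermodular, the integral points of B_S have the exchange
   property, hence so does the finite set M of feasible in-degree vectors.  Its
   lower envelope p(Z) = min {m(Z) : m in M} is then supermodular, because for
   A <= B a vector minimising m(A), and m(B) among those, minimises m(B) too;
   and M is exactly the set of integral points of the base polyhedron of p. *)

From Pilot Require Import Defs.
From HB Require Import structures.
From mathcomp Require Import all_boot all_order all_algebra zify.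
Set Implicit Arguments. Unset Strict Implicit. Unset Printing Implicit Defensive.
Import Order.TTheory GRing.Theory Num.Theory.
Local Open Scope ring_scope.

Lemma sum_setIU (T : finType) (A B : {set T}) (F : T -> int) :
  \sum_(i in A :&: B) F i + \sum_(i in A :|: B) F i =
  \sum_(i in A) F i + \sum_(i in B) F i.
Proof.
rewrite (@big_setID _ _ _ _ (A :|: B) A) setUK setDUl setDv set0U.
by rewrite [in RHS](@big_setID _ _ _ _ B A) setIC addrCA.
Qed.

Lemma big_setT (R : Type) (idx : R) (op : R -> R -> R) (T : finType) (F : T -> R) :
  \big[op/idx]_(t in [set: T]) F t = \big[op/idx]_t F t.
Proof. by apply: eq_bigl => t; rewrite inE. Qed.

Lemma sum_setC_split (T : finType) (A : {set T}) (F : T -> int) :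
  \sum_t F t = \sum_(t in A) F t + \sum_(t in ~: A) F t.
Proof. by rewrite (bigID (mem A)) /=; congr (_ + _); apply: eq_bigl => t; rewrite inE. Qed.

Lemma sum_nat_in_pred1 (T : finType) (A : {set T}) (t : T) :
  (\sum_(v in A) (v == t) = (t \in A))%N.
Proof.
rewrite (@big_setID _ _ _ _ A [set t]) /= [X in (_ + X)%N]big1 ?addn0; last first.
  by move=> v; rewrite !inE => /andP[/negbTE ->].
case: (boolP (t \in A)) => tA.
  by rewrite (setIidPr _) ?sub1set // big_set1 eqxx.
rewrite big1 // => v; rewrite !inE => /andP[vA /eqP vt].
by rewrite -vt vA in tA.
Qed.

Lemma card_set_sum (T : finType) (p : pred T) : #|[set t | p t]| = (\sum_t p t)%N.
Proof. by rewrite -sum1_card big_mkcond /=; apply: eq_bigr => t _; rewrite inE; case: (p t). Qed.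

Lemma sum_natr_pred1 (T : finType) (A : {set T}) (t : T) :
  \sum_(v in A) ((v == t)%:R : int) = (t \in A)%:R.
Proof. by rewrite -natr_sum sum_nat_in_pred1. Qed.

Lemma sum_sub_pred1 (T : finType) (A : {set T}) (x : T -> int) (t : T) :
  \sum_(v in A) (x v - (v == t)%:R) = \sum_(v in A) x v - (t \in A)%:R.
Proof. by rewrite sumrB sum_natr_pred1. Qed.

Definition transfer (T : eqType) (x : T -> int) (u w : T) : T -> int :=
  fun v => x v - (v == u)%:R + (v == w)%:R.

Lemma sum_transfer (T : finType) (x : T -> int) u w (Z : {set T}) :
  \sum_(v in Z) transfer x u w v = \sum_(v in Z) x v - (u \in Z)%:R + (w \in Z)%:R.
Proof. by rewrite big_split /= sum_sub_pred1 sum_natr_pred1. Qed.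

Section BaseExchange.
Variables (T : finType) (S : {set T}) (h : {set T} -> int).
Hypothesis h_cross : forall X Y : {set T}, X \proper S -> Y \proper S ->
  X :&: Y != set0 -> X :|: Y != S -> h X + h Y <= h (X :&: Y) + h (X :|: Y).

(* [in_BS_int ends k S msb] unfolds to [in_base S (hS ends k S msb)]. *)
Definition in_base (x : T -> int) : Prop :=
  \sum_(v in S) x v = h S /\ forall Z : {set T}, Z \proper S -> h Z <= \sum_(v in Z) x v.

Lemma in_base_eq x y : x =1 y -> in_base x -> in_base y.
Proof.
move=> xy [xS xZ]; have sumE Z : \sum_(v in Z) x v = \sum_(v in Z) y v.
  by apply: eq_bigr => v _; apply: xy.
by split=> [|Z ZS]; rewrite -sumE // xZ.
Qed.

Definition tight (x : T -> int) (Z : {set T}) : Prop :=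
  Z \subset S /\ \sum_(v in Z) x v = h Z.

Lemma in_base_ge x (Z : {set T}) : in_base x -> Z \subset S -> h Z <= \sum_(v in Z) x v.
Proof.
move=> [xS xZ]; rewrite subEproper => /predU1P[-> | /xZ //].
by rewrite xS.
Qed.

Lemma tight_setI x X Y : in_base x -> tight x X -> tight x Y ->
  X :&: Y != set0 -> X :|: Y != S -> tight x (X :&: Y).
Proof.
move=> Bx [XS xX] [YS xY] XY0 XYS.
have XYsubS : X :|: Y \subset S by rewrite subUset XS.
have XYproperS : X :|: Y \proper S by rewrite properEneq XYS.
have XproperS : X \proper S := sub_proper_trans (subsetUl X Y) XYproperS.
have YproperS : Y \proper S := sub_proper_trans (subsetUr X Y) XYproperS.
split; first by rewrite subIset ?XS.
have := h_cross XproperS YproperS XY0 XYS.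
have := in_base_ge Bx (subset_trans (subsetIl X Y) XS).
have := in_base_ge Bx XYsubS.
have := sum_setIU X Y x; rewrite xX xY; lia.
Qed.

Lemma sum_setI_cover_le x z Z0 D : in_base x -> in_base z -> tight x Z0 ->
  Z0 :|: D = S -> \sum_(v in D) x v <= \sum_(v in D) z v ->
  \sum_(v in Z0 :&: D) x v <= \sum_(v in Z0 :&: D) z v.
Proof.
move=> [xS _] Bz [Z0S xZ0] Z0DS xzD.
have := sum_setIU Z0 D x; have := sum_setIU Z0 D z; rewrite Z0DS xS (proj1 Bz) => ez ex.
by rewrite -(lerD2r (h S)) ex ez lerD // xZ0 in_base_ge.
Qed.

(* Two members whose union is not S are replaced by their intersection, which
   is tight; once every other member Z satisfies Z0 :|: Z = S, the intersection
   D of the others covers S :\: Z0 and [sum_setI_cover_le] applies. *)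
Lemma sum_bigcap_tight_le x z u (F : {set {set T}}) : in_base x -> in_base z ->
  F != set0 -> (forall Z : {set T}, Z \in F -> u \in Z /\ tight x Z) ->
  \sum_(v in \bigcap_(Z in F) Z) x v <= \sum_(v in \bigcap_(Z in F) Z) z v.
Proof.
move=> Bx Bz; have [n] := ubnP #|F|; elim: n F => // n IH F ltFn F0 tightF.
have [Z0 Z0F] := set0Pn F F0; have [uZ0 tZ0] := tightF Z0 Z0F.
rewrite (big_setD1 Z0 Z0F) /=.
have [/eqP-> | F'0] := boolP (F :\ Z0 == set0).
  by case: tZ0 => Z0S xZ0; rewrite big_set0 setIT xZ0 in_base_ge.
have tightF' (Z : {set T}) : Z \in F :\ Z0 -> u \in Z /\ tight x Z.
  by rewrite inE => /andP[_]; apply: tightF.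
have [crossing | covering] := boolP [exists Z1 in F :\ Z0, Z0 :|: Z1 != S].
  have [Z1 Z1F' Z01S] := exists_inP crossing.
  have [uZ1 tZ1] := tightF' Z1 Z1F'.
  pose F1 := (Z0 :&: Z1) |: (F :\ Z0 :\ Z1).
  have capF1 : \bigcap_(Z in F1) Z = Z0 :&: \bigcap_(Z in F :\ Z0) Z.
    rewrite big_setU /= ?big_set1; last exact: setIid.
    by rewrite (big_setD1 Z1 Z1F') setIA.
  rewrite -capF1; apply: IH.
  - move: ltFn; rewrite (cardsD1 Z0 F) Z0F (cardsD1 Z1 (F :\ Z0)) Z1F'.
    by rewrite /F1 cardsU1; case: (_ \notin _); lia.
  - by apply/set0Pn; exists (Z0 :&: Z1); rewrite setU11.
  move=> Z; rewrite in_setU1 => /predU1P[-> | ].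
    split; first by rewrite inE uZ0.
    by apply: tight_setI => //; apply/set0Pn; exists u; rewrite inE uZ0.
  by rewrite in_setD1 => /andP[_]; apply: tightF'.
apply: sum_setI_cover_le => //; last by apply: IH => //; move: ltFn; rewrite (cardsD1 Z0 F) Z0F.
have cover (Z : {set T}) : Z \in F :\ Z0 -> Z0 :|: Z = S.
  by move=> ZF'; apply/eqP; apply: contraNT covering => ?; apply/exists_inP; exists Z.
have [Z1 Z1F'] := set0Pn _ F'0.
apply/eqP; rewrite eqEsubset subUset (proj1 tZ0) /=; apply/andP; split.
  by apply: subset_trans (bigcap_inf Z1 Z1F') _; rewrite -(cover Z1 Z1F') subsetUr.
apply/subsetP => v vS; rewrite inE; case: (boolP (v \in Z0)) => //= vZ0.
by apply/bigcapP => Z /cover/setP/(_ v); rewrite inE (negbTE vZ0) vS.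
Qed.

Lemma transfer_in_base x u w : in_base x -> u \in S -> w \in S ->
  (forall Z : {set T}, Z \proper S -> u \in Z -> w \notin Z -> h Z < \sum_(v in Z) x v) ->
  in_base (transfer x u w).
Proof.
move=> [xS xZ] uS wS loose; split; first by rewrite sum_transfer uS wS xS subrK.
move=> Z ZS; rewrite sum_transfer; have := xZ Z ZS.
have [uZ|uZ] := boolP (u \in Z); last by rewrite subr0 => /le_trans->; rewrite ?lerDl.
have [wZ|wZ] := boolP (w \in Z); first by rewrite subrK.
by rewrite addr0 lerBrDr lezD1 => _; apply: loose.
Qed.

Lemma base_exchange x z u : in_base x -> in_base z -> u \in S -> z u < x u ->
  exists2 w, w \in S & x w < z w /\ in_base (transfer x u w).
Proof.
move=> Bx Bz uS zxu.
pose blocking w (Z : {set T}) := [&& Z \proper S, u \in Z, w \notin Z & \sum_(v in Z) x v == h Z].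
have [/existsP[w /and3P[wS xzw /existsPn free]] | blocked] :=
  boolP [exists w, [&& w \in S, x w < z w & ~~ [exists Z, blocking w Z]]].
  exists w => //; split => //; apply: transfer_in_base => // Z ZS uZ wZ.
  rewrite lt_neqAle (proj2 Bx Z ZS) andbT eq_sym.
  by have := free Z; rewrite /blocking ZS uZ wZ.
pose Fam := [set Z : {set T} | [&& Z \subset S, u \in Z & \sum_(v in Z) x v == h Z]].
have SFam : S \in Fam by rewrite inE subxx uS (proj1 Bx) eqxx.
have tightFam (Z : {set T}) : Z \in Fam -> u \in Z /\ tight x Z.
  by rewrite inE => /and3P[ZS uZ /eqP xZ].
have Fam0 : Fam != set0 by apply/set0Pn; exists S.
have xzD := sum_bigcap_tight_le Bx Bz Fam0 tightFam.
set D := \bigcap_(Z in Fam) Z in xzD *.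
suff : \sum_(v in D) z v < \sum_(v in D) x v by rewrite ltNge xzD.
have uD : u \in D by apply/bigcapP => Z /tightFam[].
have zx v : v \in D -> z v <= x v.
  move=> vD; rewrite leNgt; apply/negP => xzv.
  have vS : v \in S by move/bigcapP: vD; apply.
  have /existsP[Z /and4P[ZS uZ vZ /eqP xZ]] :
    [exists Z, blocking v Z] by apply: contraNT blocked => ?; apply/existsP; exists v; apply/and3P.
  have ZFam : Z \in Fam by rewrite inE (proper_sub ZS) uZ xZ eqxx.
  by move/bigcapP: vD => /(_ Z ZFam); rewrite (negbTE vZ).
rewrite (bigD1 u uD) [X in _ < X](bigD1 u uD) /=.
by apply: ltr_leD zxu _; apply: ler_sum => v /andP[vD _]; apply: zx.
Qed.
End BaseExchange.

Definition l1dist (T : finType) (x y : T -> int) : nat := \sum_t `|x t - y t|%N.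

Lemma l1dist_transfer (T : finType) (x y : T -> int) w u :
  x w < y w -> y u < x u -> (l1dist x (transfer y w u) < l1dist x y)%N.
Proof.
move=> xyw yxu; have wu : w != u by apply: contraTneq xyw => ->; rewrite -leNgt ltW.
rewrite /l1dist (bigD1 w) // [X in (_ < X)%N](bigD1 w) //= -addSn leq_add //.
  by rewrite /transfer eqxx (negbTE wu) /=; lia.
apply: leq_sum => v /negbTE vw; rewrite /transfer vw /=.
have [->|_] := eqVneq v u; last by rewrite subr0 addr0.
by lia.
Qed.

Section LowerEnvelope.
Variables (T I : finType) (vec : I -> T -> int) (P : pred I).
Hypothesis exchange : forall i j u, P i -> P j -> vec j u < vec i u ->
  exists w, vec i w < vec j w /\ exists2 l, P l & vec l =1 transfer (vec i) u w.

Lemma locally_minimal_is_minimal i (C : {set T}) : P i ->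
  (forall u w l, u \in C -> w \notin C -> P l -> ~ vec l =1 transfer (vec i) u w) ->
  forall j, P j -> \sum_(t in C) vec i t <= \sum_(t in C) vec j t.
Proof.
move=> Pi loc j Pj; have [n] := ubnP (l1dist (vec i) (vec j)).
elim: n j Pj => // n IH j Pj ltn.
rewrite leNgt; apply/negP => jiC.
have [/exists_inP[w wC ijw] | /exists_inPn jiC'] := boolP [exists w in C, vec i w < vec j w].
  have [u [jiu [l Pl el]]] := exchange Pj Pi ijw.
  have dl : (l1dist (vec i) (vec l) < n)%N.
    have -> : l1dist (vec i) (vec l) = l1dist (vec i) (transfer (vec j) w u).
      by apply: eq_bigr => t _; rewrite el.
    by have := l1dist_transfer ijw jiu; lia.
  have := IH l Pl dl; rewrite (eq_bigr _ (fun t _ => el t)) sum_transfer wC.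
  by lia.
have [/exists_inP[u uC jiu] | /exists_inPn ijC] := boolP [exists u in C, vec j u < vec i u].
  have [w [ijw [l Pl el]]] := exchange Pi Pj jiu.
  by apply: loc uC _ Pl el; apply: contraTN ijw; apply: jiC'.
move: jiC; apply/negP; rewrite -leNgt; apply: ler_sum => t tC.
by rewrite leNgt; apply: ijC.
Qed.

Lemma family_sum_eq i j : P i -> P j -> \sum_t vec i t = \sum_t vec j t.
Proof.
have sum_min k l : P k -> P l -> \sum_(t in [set: T]) vec k t <= \sum_(t in [set: T]) vec l t.
  by move=> Pk Pl; apply: locally_minimal_is_minimal => // u w m _; rewrite inE.
by move=> Pi Pj; apply/eqP; rewrite eq_le -!big_setT !sum_min.
Qed.

Variable i0 : I.
Hypothesis P_i0 : P i0.

(* Take i2 minimising B among the minimisers of A: moving a unit out of B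
   either lowers the sum over A or gives a minimiser of A with a smaller sum
   over B, so [locally_minimal_is_minimal] applies. *)
Lemma exists_common_minimizer (A B : {set T}) : A \subset B ->
  exists2 i, P i & forall j, P j ->
    \sum_(t in A) vec i t <= \sum_(t in A) vec j t /\
    \sum_(t in B) vec i t <= \sum_(t in B) vec j t.
Proof.
move=> AB; have [i1 Pi1 minA] := arg_minP (fun i => \sum_(t in A) vec i t) P_i0.
pose PA j := P j && (\sum_(t in A) vec j t == \sum_(t in A) vec i1 t).
have PAi1 : PA i1 by rewrite /PA Pi1 eqxx.
have [i2 /andP[Pi2 /eqP Ai2] minB] := arg_minP (fun i => \sum_(t in B) vec i t) PAi1.
exists i2 => // j Pj; split; first by rewrite Ai2 minA.
apply: locally_minimal_is_minimal => // u w l uB wB Pl el.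
have wA : w \notin A := contra (subsetP AB w) wB.
have := minA l Pl; have := minB l; rewrite /PA Pl /=.
rewrite !(eq_bigr _ (fun t _ => el t)) !sum_transfer uB (negbTE wB) (negbTE wA) Ai2.
by case: (u \in A) => /=; rewrite ?eqxx ?subr0 ?addr0; lia.
Qed.

Definition envelope (Z : {set T}) : int :=
  \sum_(t in Z) vec [arg min_(i < i0 | P i) \sum_(t in Z) vec i t]%O t.

Lemma envelope_attained Z : exists2 i, P i & envelope Z = \sum_(t in Z) vec i t.
Proof. by rewrite /envelope; case: arg_minP => // i Pi _; exists i. Qed.

Lemma envelope_le Z j : P j -> envelope Z <= \sum_(t in Z) vec j t.
Proof. by rewrite /envelope; case: arg_minP => // i _; apply. Qed.

Lemma envelope_supermodular X Y :
  envelope X + envelope Y <= envelope (X :&: Y) + envelope (X :|: Y).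
Proof.
have [i Pi mini] := exists_common_minimizer (subset_trans (subsetIl X Y) (subsetUl X Y)).
have [iI PiI ->] := envelope_attained (X :&: Y).
have [iU PiU ->] := envelope_attained (X :|: Y).
apply: le_trans (lerD (envelope_le X Pi) (envelope_le Y Pi)) _.
by rewrite -sum_setIU; apply: lerD; [apply: (mini iI PiI).1 | apply: (mini iU PiU).2].
Qed.

Lemma envelope_fully_supermodular : fully_supermodular (fun Z => Some (envelope Z)).
Proof.
split=> // [|X Y _ _ [<-] [<-]]; first by rewrite /envelope big_set0.
by exists (envelope (X :&: Y)), (envelope (X :|: Y)); split; last exact: envelope_supermodular.
Qed.

Lemma family_base_point j m : P j -> m =1 vec j ->
  base_int_points (fun Z => Some (envelope Z)) m.
Proof.
move=> Pj mj; have sum_m Z : \sum_(t in Z) m t = \sum_(t in Z) vec j t.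
  by apply: eq_bigr => t _; apply: mj.
split=> [|Z a [<-]]; last by rewrite sum_m; apply: envelope_le.
have [i Pi ->] := envelope_attained setT.
by rewrite big_setT (family_sum_eq Pi Pj) -big_setT sum_m big_setT.
Qed.

Lemma base_point_sum_const m (Z : {set T}) c :
  base_int_points (fun Z => Some (envelope Z)) m ->
  (forall j, P j -> \sum_(t in Z) vec j t = c) -> \sum_(t in Z) m t = c.
Proof.
move=> [mT mZ] cZ; have [iC PiC eC] := envelope_attained (~: Z).
have [iT PiT eT] := envelope_attained setT.
move: mT; rewrite eT big_setT (family_sum_eq PiT PiC) => -[].
rewrite !(sum_setC_split Z) cZ // => sumT.
have := mZ (~: Z) _ erefl; have := mZ Z _ erefl.
have [iZ PiZ ->] := envelope_attained Z; rewrite eC cZ //; lia.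
Qed.

End LowerEnvelope.

Section Orientations.
Variables (V E : finType) (ends : E -> V * V).
Implicit Types (o : {ffun E -> bool}) (F : {set E}) (Y : {set V}).

Local Notation head := (Defs.head ends).
Local Notation inside Y e := (((ends e).1 \in Y) && ((ends e).2 \in Y)).

Definition indeg_in F o v : nat := \sum_(e in F) (head o e == v).
Definition inner_in F Y : nat := \sum_(e in F) inside Y e.

Lemma indeg_in_setT o v : indeg_in setT o v = indeg ends o v.
Proof. by rewrite /indeg card_set_sum /indeg_in big_setT. Qed.

Lemma inner_in_setT Y : inner_in setT Y = iG ends Y.
Proof. by rewrite /iG card_set_sum /inner_in big_setT. Qed.

Lemma indeg_in_D1 F e o v : e \in F ->
  indeg_in F o v = ((head o e == v) + indeg_in (F :\ e) o v)%N.
Proof. exact: big_setD1. Qed.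

Lemma inner_in_D1 F e Y : e \in F -> inner_in F Y = (inside Y e + inner_in (F :\ e) Y)%N.
Proof. exact: big_setD1. Qed.

Lemma inner_in_supermodular F Y1 Y2 :
  (inner_in F Y1 + inner_in F Y2 <= inner_in F (Y1 :&: Y2) + inner_in F (Y1 :|: Y2))%N.
Proof.
rewrite /inner_in -!big_split /=; apply: leq_sum => e _; rewrite !inE.
by case: ((ends e).1 \in Y1); case: ((ends e).2 \in Y1);
   case: ((ends e).1 \in Y2); case: ((ends e).2 \in Y2).
Qed.

Lemma inner_in_crossing F e Y1 Y2 : e \in F ->
  (ends e).2 \in Y1 -> (ends e).1 \notin Y1 -> (ends e).1 \in Y2 -> (ends e).2 \notin Y2 ->
  (inner_in F Y1 + inner_in F Y2 < inner_in F (Y1 :&: Y2) + inner_in F (Y1 :|: Y2))%N.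
Proof.
move=> eF b1 a1 a2 b2; rewrite !(inner_in_D1 _ eF) !inE b1 (negbTE a1) a2 (negbTE b2) /=.
by have := inner_in_supermodular (F :\ e) Y1 Y2; lia.
Qed.

Lemma inner_in_violated F e Y (m : V -> int) c d : e \in F ->
  inside Y e = (c \in Y) && (d \in Y) ->
  (inner_in F Y)%:Z <= \sum_(v in Y) m v ->
  ~~ ((inner_in (F :\ e) Y)%:Z <= \sum_(v in Y) m v - (c \in Y)%:R) ->
  [/\ c \in Y, d \notin Y & (inner_in F Y)%:Z = \sum_(v in Y) m v].
Proof.
move=> eF insideE; rewrite (inner_in_D1 _ eF) insideE -ltNge.
by case: (c \in Y); case: (d \in Y) => /= le lt; first [exfalso; lia | split => //; lia].
Qed.

(* If neither orientation of e works, the two violating sets are tight and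
   crossed by e in opposite directions, against [inner_in_crossing]. *)
Lemma orientable_edge F e (m : V -> int) : e \in F ->
  (forall Y, (inner_in F Y)%:Z <= \sum_(v in Y) m v) ->
  exists b : bool, forall Y, (inner_in (F :\ e) Y)%:Z <=
    \sum_(v in Y) m v - ((if b then (ends e).2 else (ends e).1) \in Y)%:R.
Proof.
move=> eF inner_m.
pose fits (b : bool) := [forall Y, (inner_in (F :\ e) Y)%:Z <=
    \sum_(v in Y) m v - ((if b then (ends e).2 else (ends e).1) \in Y)%:R].
have [/forallP ok | /forallPn[Y1 bad1]] := boolP (fits true); first by exists true.
have [/forallP ok | /forallPn[Y2 bad2]] := boolP (fits false); first by exists false.
have [b1 a1 t1] := inner_in_violated eF (andbC _ _) (inner_m Y1) bad1.
have [a2 b2 t2] := inner_in_violated eF erefl (inner_m Y2) bad2.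
have := inner_in_crossing eF b1 a1 a2 b2.
have := inner_m (Y1 :&: Y2); have := inner_m (Y1 :|: Y2); have := sum_setIU Y1 Y2 m.
by lia.
Qed.

Lemma hakimi_in F (m : V -> int) :
  \sum_v m v = #|F|%:Z -> (forall Y, (inner_in F Y)%:Z <= \sum_(v in Y) m v) ->
  exists o, forall v, (indeg_in F o v)%:Z = m v.
Proof.
have [n] := ubnP #|F|; elim: n F m => // n IH F m ltFn sum_m inner_m.
have [F0 | [e eF]] := set_0Vmem F.
  have m_ge0 v : 0 <= m v.
    by have := inner_m [set v]; rewrite big_set1 /inner_in F0 big_set0.
  have sum0 : \sum_v m v = 0 by rewrite sum_m F0 cards0.
  exists [ffun=> true] => v; rewrite /indeg_in F0 big_set0.
  by rewrite (@psumr_eq0P _ _ predT m (fun v _ => m_ge0 v) sum0 v).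
have [b inner_m'] := orientable_edge eF inner_m.
set c := if b then _ else _ in inner_m'.
have [|||o' indeg_o'] := IH (F :\ e) (fun v => m v - (v == c)%:R).
- by move: ltFn; rewrite (cardsD1 e F) eF.
- by rewrite -big_setT sum_sub_pred1 big_setT sum_m (cardsD1 e F) eF inE; lia.
- by move=> Y; rewrite sum_sub_pred1.
exists [ffun x => if x == e then b else o' x] => v.
rewrite (indeg_in_D1 _ _ eF) PoszD /Defs.head ffunE eqxx -/c.
have -> : indeg_in (F :\ e) [ffun x => if x == e then b else o' x] v = indeg_in (F :\ e) o' v.
  by apply: eq_bigr => x; rewrite !inE /Defs.head ffunE => /andP[/negbTE ->].
by rewrite indeg_o' eq_sym; case: (v == c) => /=; lia.
Qed.

Lemma hakimi (m : V -> int) :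
  \sum_v m v = #|E|%:Z -> (forall Y, (iG ends Y)%:Z <= \sum_(v in Y) m v) ->
  exists o, forall v, (indeg ends o v)%:Z = m v.
Proof.
move=> sum_m iG_m; have [||o indeg_o] := @hakimi_in setT m.
- by rewrite cardsT.
- by move=> Y; rewrite inner_in_setT.
by exists o => v; rewrite -indeg_in_setT.
Qed.

Lemma sum_indeg_heads o Y : (\sum_(v in Y) indeg ends o v = \sum_e (head o e \in Y))%N.
Proof.
under eq_bigr do rewrite /indeg card_set_sum.
rewrite exchange_big; apply: eq_bigr => e _; rewrite -sum_nat_in_pred1.
by under eq_bigr do rewrite eq_sym.
Qed.

Lemma sum_indeg o : (\sum_v indeg ends o v = #|E|)%N.
Proof. by rewrite -big_setT sum_indeg_heads -sum1_card; apply: eq_bigr => e _; rewrite inE. Qed.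

Lemma sum_indeg_iG_rho o Y : (\sum_(v in Y) indeg ends o v = iG ends Y + rho ends o Y)%N.
Proof.
rewrite sum_indeg_heads /iG /rho !card_set_sum -big_split; apply: eq_bigr => e _ /=.
by rewrite /Defs.head /tail; case: (o e); case: ((ends e).1 \in Y); case: ((ends e).2 \in Y).
Qed.

Lemma iG_supermodular Y1 Y2 :
  (iG ends Y1 + iG ends Y2 <= iG ends (Y1 :&: Y2) + iG ends (Y1 :|: Y2))%N.
Proof. by rewrite -!inner_in_setT inner_in_supermodular. Qed.

End Orientations.

Section Characterization.
Variables (V E : finType) (ends : E -> V * V) (k : nat) (S : {set V}) (msb : V -> int).
Implicit Types (o : {ffun E -> bool}) (Y Z X : {set V}).

Local Notation h := (hS ends k S msb).

Lemma setU_splitS Z X : Z \subset S -> X \subset ~: S ->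
  (Z :|: X) :&: S = Z /\ (Z :|: X) :\: S = X.
Proof.
move=> ZS XS; have XS' : [disjoint X & S] by rewrite -(setCK S) -subsets_disjoint.
rewrite setIUl (setIidPl ZS) (disjoint_setI0 XS') setU0 setDUl (setDidPl XS').
have /eqP-> : Z :\: S == set0 by rewrite setD_eq0.
by rewrite set0U.
Qed.

Lemma hS_ge Z X : Z != set0 -> Z != S -> X \subset ~: S ->
  k%:Z + (iG ends (Z :|: X))%:Z - \sum_(v in X) msb v <= h Z.
Proof. by move=> Z0 ZS XS; rewrite /hS (negbTE Z0) (negbTE ZS); apply: le_bigmax_cond. Qed.

Lemma hS_attained Z : Z != set0 -> Z != S ->
  exists2 X : {set V}, X \subset ~: S & h Z = k%:Z + (iG ends (Z :|: X))%:Z - \sum_(v in X) msb v.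
Proof.
move=> Z0 ZS; rewrite /hS (negbTE Z0) (negbTE ZS).
elim/big_ind: _ => [|a b [Xa XaS ->] [Xb XbS ->]|X XS]; last by exists X.
- by exists set0; rewrite ?sub0set // setU0 big_set0 subr0.
- by rewrite /Num.max; case: ifP => _; [exists Xb | exists Xa].
Qed.

Lemma hS_crossing (T0 T1 : {set V}) : T0 \proper S -> T1 \proper S ->
  T0 :&: T1 != set0 -> T0 :|: T1 != S -> h T0 + h T1 <= h (T0 :&: T1) + h (T0 :|: T1).
Proof.
move=> T0pS T1pS T01_0 T01_S.
move: T0pS T1pS; rewrite !properEneq => /andP[T0nS T0S] /andP[T1nS T1S].
have T0_0 : T0 != set0 by apply: contraNneq T01_0 => ->; rewrite set0I.
have T1_0 : T1 != set0 by apply: contraNneq T01_0 => ->; rewrite setI0.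
have TI_S : T0 :&: T1 != S.
  by apply: contraNneq T0nS => TIS; rewrite eqEsubset T0S -TIS subsetIl.
have TU_0 : T0 :|: T1 != set0.
  by apply: contraNneq T0_0 => /eqP; rewrite setU_eq0 => /andP[/eqP->].
have [X0 X0S ->] := hS_attained T0_0 T0nS.
have [X1 X1S ->] := hS_attained T1_0 T1nS.
have XIS := subset_trans (subsetIl X0 X1) X0S.
have XUS : X0 :|: X1 \subset ~: S by rewrite subUset X0S.
apply: le_trans (lerD (hS_ge T01_0 TI_S XIS) (hS_ge TU_0 T01_S XUS)).
rewrite addrACA [leRHS]addrACA -!opprD sum_setIU lerD2r addrACA [leRHS]addrACA lerD2l.
rewrite -!PoszD lez_nat setUACA; apply: leq_trans (iG_supermodular ends (T0 :|: X0) (T1 :|: X1)) _.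
have [A_S A_nS] := setU_splitS T0S X0S; have [B_S B_nS] := setU_splitS T1S X1S.
by rewrite -[(T0 :|: X0) :&: _](setID _ S) setIIl setDIl A_S A_nS B_S B_nS.
Qed.

Definition good o : bool :=
  [forall X : {set V}, (X :&: S != set0) ==> (S :\: X != set0) ==> (k <= rho ends o X)%N]
  && [forall v, (v \notin S) ==> ((indeg ends o v)%:Z == msb v)].

Lemma goodP o : reflect
  (loc_kec ends o S k /\ forall v, v \notin S -> (indeg ends o v)%:Z = msb v) (good o).
Proof.
apply: (iffP andP) => [[/forallP lk /forallP off] | [lk off]]; split.
- by move=> X XS SX; have := lk X; rewrite XS SX.
- by move=> v vS; apply/eqP; have := off v; rewrite vS.
- by apply/forallP => X; apply/implyP => XS; apply/implyP; apply: lk.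
- by apply/forallP => v; apply/implyP => vS; rewrite off.
Qed.

Definition indeg_vec o (v : V) : int := (indeg ends o v)%:Z.

Lemma sum_indeg_vec o Y : \sum_(v in Y) indeg_vec o v = (\sum_(v in Y) indeg ends o v)%N%:Z.
Proof. by rewrite -natz natr_sum; apply: eq_bigr => v _; rewrite natz. Qed.

Lemma sum_indeg_vec_S o : good o -> \sum_(v in S) indeg_vec o v = h S.
Proof.
move=> /goodP[_ off]; rewrite /hS eqxx; case: eqP => [-> | _]; first by rewrite big_set0.
have <- : \sum_(v in ~: S) indeg_vec o v = \sum_(v in ~: S) msb v.
  by apply: eq_bigr => v; rewrite inE => /off.
by rewrite -(sum_indeg ends o) -big_setT -sum_indeg_vec big_setT (sum_setC_split S) addrK.
Qed.

Lemma good_in_base o : good o -> in_BS_int ends k S msb (indeg_vec o).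
Proof.
move=> go; split; first exact: sum_indeg_vec_S.
have /goodP[lk off] := go.
move=> Z ZpS; have /andP[ZnS ZS] : (Z != S) && (Z \subset S) by rewrite -properEneq.
have [-> | Z0] := eqVneq Z set0; first by rewrite /hS eqxx big_set0.
have [X XS ->] := hS_attained Z0 ZnS; have [Y_S Y_nS] := setU_splitS ZS XS.
have k_rho : (k <= rho ends o (Z :|: X))%N.
  apply: (lk (Z :|: X)); first by rewrite Y_S.
  have [_ [v vS vZ]] := properP ZpS; apply/set0Pn; exists v.
  by rewrite !inE vS negb_or vZ andbT /=; apply/negP => /(subsetP XS); rewrite inE vS.
have sumY : \sum_(v in Z :|: X) indeg_vec o v = \sum_(v in Z) indeg_vec o v + \sum_(v in X) msb v.
  rewrite (big_setID S) /= Y_S Y_nS; congr (_ + _).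
  by apply: eq_bigr => v /(subsetP XS); rewrite inE => /off.
rewrite -[leRHS](addrK (\sum_(v in X) msb v)) -sumY sum_indeg_vec sum_indeg_iG_rho PoszD.
by rewrite lerD2r addrC lerD2l lez_nat.
Qed.

Lemma in_base_separating m Y : in_BS_int ends k S msb m ->
  (forall v, v \notin S -> m v = msb v) -> Y :&: S != set0 -> S :\: Y != set0 ->
  k%:Z + (iG ends Y)%:Z <= \sum_(v in Y) m v.
Proof.
move=> [_ mZ] off YS0 SY0.
have YSnS : Y :&: S != S.
  by apply: contraNneq SY0 => YSS; rewrite setD_eq0 -{1}YSS subsetIl.
have XS : Y :\: S \subset ~: S by apply/subsetP => v; rewrite !inE => /andP[].
rewrite (big_setID S) /= -lerBlDr.
have -> : \sum_(v in Y :\: S) m v = \sum_(v in Y :\: S) msb v.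
  by apply: eq_bigr => v; rewrite inE => /andP[/off].
have := hS_ge YS0 YSnS XS; rewrite setID => /le_trans; apply.
by apply: mZ; rewrite properEneq YSnS subsetIr.
Qed.

Lemma in_base_orientable o0 m : good o0 -> in_BS_int ends k S msb m ->
  (forall v, v \notin S -> m v = msb v) -> exists2 o, good o & m =1 indeg_vec o.
Proof.
move=> go0 Bm off; have /goodP[_ off0] := go0.
have off_o0 v : v \notin S -> m v = indeg_vec o0 v by move=> vS; rewrite off // /indeg_vec off0.
have sum_m : \sum_v m v = #|E|%:Z.
  rewrite (sum_setC_split S) Bm.1 -(sum_indeg_vec_S go0) -(sum_indeg ends o0).
  rewrite -big_setT -sum_indeg_vec big_setT (sum_setC_split S); congr (_ + _).
  by apply: eq_bigr => v; rewrite inE => /off_o0.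
have agree Y : \sum_(v in Y :&: S) m v = \sum_(v in Y :&: S) indeg_vec o0 v ->
    (iG ends Y)%:Z <= \sum_(v in Y) m v.
  move=> mYS; rewrite (big_setID S) /= mYS.
  have -> : \sum_(v in Y :\: S) m v = \sum_(v in Y :\: S) indeg_vec o0 v.
    by apply: eq_bigr => v; rewrite inE => /andP[/off_o0].
  by rewrite -big_setID sum_indeg_vec sum_indeg_iG_rho lez_nat leq_addr.
have iG_m Y : (iG ends Y)%:Z <= \sum_(v in Y) m v.
  have [YS0 | /negPn/eqP YS0] := boolP (Y :&: S != set0); last first.
    by apply: agree; rewrite YS0 !big_set0.
  have [SY0 | /negPn] := boolP (S :\: Y != set0).
    by apply: le_trans (in_base_separating Bm off YS0 SY0); rewrite lerDr.
  by rewrite setD_eq0 => /setIidPr SY; apply: agree; rewrite SY Bm.1 sum_indeg_vec_S.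
have [o indeg_o] := hakimi sum_m iG_m.
exists o => [|v]; last by rewrite /indeg_vec indeg_o.
apply/goodP; split=> [X XS SX | v vS]; last by rewrite indeg_o off.
have := in_base_separating Bm off XS SX.
have -> : \sum_(v in X) m v = \sum_(v in X) indeg_vec o v.
  by apply: eq_bigr => v _; rewrite /indeg_vec indeg_o.
by rewrite sum_indeg_vec sum_indeg_iG_rho PoszD [leLHS]addrC lerD2l lez_nat.
Qed.

Lemma good_exchange o o' u : good o -> good o' -> indeg_vec o' u < indeg_vec o u ->
  exists w, indeg_vec o w < indeg_vec o' w /\
            exists2 l, good l & indeg_vec l =1 transfer (indeg_vec o) u w.
Proof.
move=> go go' lt_u; have /goodP[_ off] := go.
have uS : u \in S.
  apply: contraLR lt_u => uS; have /goodP[_ off'] := go'.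
  by rewrite /indeg_vec off // off' // ltxx.
have [w wS [lt_w Bt]] := base_exchange hS_crossing (good_in_base go) (good_in_base go') uS lt_u.
exists w; split=> //.
have off_t v : v \notin S -> transfer (indeg_vec o) u w v = msb v.
  move=> vS; have [/negbTE vu /negbTE vw] : v != u /\ v != w.
    by split; apply: contraNneq vS => ->.
  by rewrite /transfer vu vw subr0 addr0 /indeg_vec off.
have [l gl tl] := in_base_orientable go Bt off_t.
by exists l => // v; rewrite tl.
Qed.

Lemma indeg_vectorsP o0 m : good o0 -> indeg_vectors ends k S msb m <->
  in_BS_int ends k S msb m /\ forall v, v \notin S -> m v = msb v.
Proof.
move=> go0; split=> [[o [lk off em]] | [Bm off]].
  have go : good o by apply/goodP.
  split=> [|v vS]; last by rewrite em off.
  by apply: (in_base_eq _ (good_in_base go)) => v; rewrite em.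
have [o /goodP[lk off_o] em] := in_base_orientable go0 Bm off.
by exists o; split.
Qed.

Lemma base_point_in_base o0 m : good o0 ->
  base_int_points (fun Z => Some (envelope indeg_vec good o0 Z)) m ->
  in_BS_int ends k S msb m /\ forall v, v \notin S -> m v = msb v.
Proof.
move=> go0 bm; have sum_const := base_point_sum_const good_exchange go0 bm.
split=> [|v vS]; first split.
- exact: sum_const sum_indeg_vec_S.
- move=> Z ZpS; apply: le_trans (bm.2 Z _ erefl).
  have [o go ->] := envelope_attained indeg_vec go0 Z.
  exact: (good_in_base go).2.
transitivity (\sum_(t in [set v]) m t); first by rewrite big_set1.
by apply: sum_const => o /goodP[_ off]; rewrite big_set1 /indeg_vec off.
Qed.

End Characterization.

Theorem theorem6p9 (V E : finType) (ends : E -> V * V) (k : nat)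
    (S : {set V}) (msb : V -> int) :
  (0 < k)%N ->
  (exists m, indeg_vectors ends k S msb m) ->
  Mconvex (indeg_vectors ends k S msb) /\
  (forall m : V -> int, indeg_vectors ends k S msb m <->
     (in_BS_int ends k S msb m /\ forall v, v \notin S -> m v = msb v)).
Proof.
(* The argument works for every k. *)
move=> _ [_ [o0 [lk0 off0 _]]].
have go0 : good ends k S msb o0 by apply/goodP.
have exch := @good_exchange _ _ ends k S msb.
split; last by move=> m; exact: indeg_vectorsP m go0.
exists (fun Z => Some (envelope (indeg_vec ends) (good ends k S msb) o0 Z)).
split; first exact: (envelope_fully_supermodular (vec := indeg_vec ends) exch go0).
move=> m; split=> [[o [lk off em]] | bm]; last first.
  by apply/(indeg_vectorsP m go0)/(base_point_in_base go0).
by apply: (family_base_point exch go0 (j := o)) => //; apply/goodP.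
Qed.
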